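(* Let $D=\mathrm{diag}(d_1,\dots,d_n)\in\mathbb{D}^n_+$, $W\in\mathbb{R}^{n\times n}$, $u\in\mathbb{R}^n$, $A:=W-D$ with rows $A_i^\top$, $\mathcal X=\{x\in\mathbb{R}^n: Dx\in[0,1]^n\}$, $\Lambda=\mathrm{diag}(\lambda_1,\dots,\lambda_n)\in\mathbb{D}^n_+$, and $$V_\infty(x)=\max_{\zeta\in\{0,1\}^n}(Ax+u)^\top\Lambda(\zeta-Dx).$$ Then: (i) for every $x\in\mathcal X$, $V_\infty(x)=\sum_{i=1}^n\lambda_i\big((A_i^\top x+u_i)_+(1-d_ix_i)+(A_i^\top x+u_i)_-d_ix_i\big)=\sum_{i=1}^n\lambda_i\big((A_i^\top x+u_i)_+-d_i(A_i^\top x+u_i)x_i\big)$; (ii) $V_\infty$ is globally Lipschitz on $\mathcal X$ and $V_\infty(x)\ge0$ for all $x\in\mathcal X$; (iii) for $x\in\mathcal X$, $V_\infty(x)=0$ if and only if $x$ is an equilibrium of the hard-selector inclusion $x'\in-Dx+\mathcal H(Ax+u)$; in particular, if $A$ is Lyapunov diagonally stable (with $\Lambda$ a diagonal certificate), then $V_\infty$ is positive definite on $\mathcal X$ with respect to the unique equilibrium $x^\star$.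
   Context: $\mathbb{D}^n_+$ is the set of positive diagonal matrices. $(z)_+=\max(0,z)$, $(z)_-=-\min(0,z)$. $h(z)=\{0\}$ if $z<0$, $[0,1]$ if $z=0$, $\{1\}$ if $z>0$, and $\mathcal H(x)=h(x_1)\times\cdots\times h(x_n)$; an equilibrium of the inclusion is $x$ with $0\in-Dx+\mathcal H(Ax+u)$. A matrix $A$ is Lyapunov diagonally stable with diagonal certificate $\Lambda\in\mathbb{D}^n_+$ if $A^\top\Lambda+\Lambda A\prec0$; in the paper $\Lambda$ in $V_\infty$ is taken to be this certificate. *)

From mathcomp Require Import all_boot all_order all_algebra.
Set Implicit Arguments. Unset Strict Implicit. Unset Printing Implicit Defensive.
Import Order.TTheory GRing.Theory Num.Theory.
Local Open Scope ring_scope.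

Definition Dmx (R : realFieldType) (n : nat) (d : 'I_n -> R) : 'M[R]_n :=
  diag_mx (\row_i d i).

Definition ppart (R : realFieldType) (z : R) : R := Num.max 0 z.
Definition npart (R : realFieldType) (z : R) : R := - Num.min 0 z.

Definition zcol (R : realFieldType) (n : nat) (z : {ffun 'I_n -> bool}) : 'cV[R]_n :=
  \col_i (z i)%:R.

(* V_infty(x) = max_{zeta in {0,1}^n} (Ax+u)^T Lambda (zeta - D x),  A = W - D.
   The max over the (nonempty) finite set {0,1}^n is written as an iterated
   Num.max seeded with the value at zeta = 0. *)
Definition Vinf (R : realFieldType) (n : nat) (W : 'M[R]_n) (d lam : 'I_n -> R)
    (u x : 'cV[R]_n) : R :=
  let A := W - Dmx d in
  let f := fun z : {ffun 'I_n -> bool} =>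
    ((A *m x + u)^T *m Dmx lam *m (zcol R z - Dmx d *m x)) 0 0 in
  \big[Num.max/f [ffun=> false]]_(z : {ffun 'I_n -> bool}) f z.

Definition inX (R : realFieldType) (n : nat) (d : 'I_n -> R) (x : 'cV[R]_n) : Prop :=
  forall i, 0 <= d i * x i 0 <= 1.

Definition in_h (R : realFieldType) (z y : R) : Prop :=
  (z < 0 -> y = 0) /\ (z = 0 -> 0 <= y <= 1) /\ (0 < z -> y = 1).

Definition equilibrium (R : realFieldType) (n : nat) (W : 'M[R]_n) (d : 'I_n -> R)
    (u x : 'cV[R]_n) : Prop :=
  exists h : 'cV[R]_n,
    (forall i, in_h (((W - Dmx d) *m x + u) i 0) (h i 0)) /\
    (0 : 'cV[R]_n) = - (Dmx d *m x) + h.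

(* f is globally Lipschitz on the set P (w.r.t. the l1 norm on R^n;
   all norms on R^n are equivalent) *)
Definition lipschitz_on (R : realFieldType) (n : nat) (P : 'cV[R]_n -> Prop)
    (f : 'cV[R]_n -> R) : Prop :=
  exists L : R, 0 <= L /\
    forall x y, P x -> P y -> `|f x - f y| <= L * \sum_i `|x i 0 - y i 0|.

Definition LDS_cert (R : realFieldType) (n : nat) (A : 'M[R]_n) (lam : 'I_n -> R) : Prop :=
  forall v : 'cV[R]_n, v != 0 -> (v^T *m (A^T *m Dmx lam + Dmx lam *m A) *m v) 0 0 < 0.

(* With z = Ax + u, the maximum defining V_inf is attained at zeta_i = [z_i > 0], which
   turns V_inf into the lambda-weighted sum of the gaps (z_i)_+ (1 - d_i x_i) + (z_i)_- d_i x_i.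
   On X each gap is nonnegative and vanishes iff d_i x_i lies in h(z_i), the equilibrium
   condition; as X is bounded, V_inf, built from affine maps, (.)_+ and products, is Lipschitz.
   If A is diagonally stable then -A is a P-matrix: for x <> y some i has
   (x_i - y_i) (A (x - y))_i < 0, whereas the selector relation is monotone, so equilibria are
   unique.  Existence is proved for mixed problems where each coordinate carries the selector
   constraint, a pinned value of d_i x_i, or z_i = 0.  A selector coordinate is replaced by the
   pin 0, the pin 1 or z_i = 0, and uniqueness forces one of the three solutions to satisfy the
   selector; once only linear constraints are left, z_i = 0 is met on the line through the
   solutions pinned at 0 and at 1. *)

From mathcomp Require Import all_boot all_order all_algebra.
From mathcomp Require Import ring lra.
Import Order.TTheory GRing.Theory Num.Theory.
Set Implicit Arguments. Unset Strict Implicit. Unset Printing Implicit Defensive.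
Local Open Scope ring_scope.

Section PositivePart.
Variable R : realFieldType.
Implicit Types z t a b : R.

Lemma ppartE z : ppart z = if 0 <= z then z else 0.
Proof. by rewrite /ppart; case: lerP. Qed.

Lemma npartE z : npart z = if 0 <= z then 0 else - z.
Proof. by rewrite /npart; case: lerP; rewrite ?oppr0. Qed.

Lemma ppart_ge0 z : 0 <= ppart z.
Proof. by rewrite ppartE; case: ifP. Qed.

Lemma npart_ge0 z : 0 <= npart z.
Proof. by rewrite npartE; case: (lerP 0 z) => // z_lt0; rewrite oppr_ge0 ltW. Qed.

Lemma mulr_natb_le_ppart z (b : bool) : z * b%:R <= ppart z.
Proof. by rewrite ppartE; case: b; case: (lerP 0 z) => z0; rewrite ?mulr1 ?mulr0 //; lra. Qed.

Lemma mulr_natb_gt0 z : z * (0 < z)%R%:R = ppart z.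
Proof. by rewrite ppartE; case: (ltrgtP 0 z) => z0; rewrite ?mulr1 ?mulr0 //; lra. Qed.

Lemma ppart_lipschitz a b : `|ppart a - ppart b| <= `|a - b|.
Proof.
rewrite !ppartE; case: (lerP 0 a) => a0; case: (lerP 0 b) => b0.
- by [].
- by rewrite subr0 !ger0_norm //; lra.
- by rewrite sub0r normrN ger0_norm // ler0_norm; lra.
- by rewrite subrr normr0.
Qed.

End PositivePart.

Section HardSelector.
Variable R : realFieldType.
Implicit Types z t a b : R.

Lemma in_h_bounds z t : in_h z t -> 0 <= t <= 1.
Proof.
case=> [z_lt0 [z_eq0 z_gt0]]; case: (ltrgtP z 0) => [/z_lt0|/z_gt0|/z_eq0] -> //.
- by rewrite lexx ler01.
- by rewrite ler01 lexx.
Qed.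

Lemma in_h_le0 z : z <= 0 -> in_h z 0.
Proof. by move=> z_le0; split; [|split] => [//|_|z_gt0]; rewrite ?lexx ?ler01 //; lra. Qed.

Lemma in_h_ge0 z : 0 <= z -> in_h z 1.
Proof. by move=> z_ge0; split; [|split] => [z_lt0|_|//]; rewrite ?lexx ?ler01 //; lra. Qed.

Lemma in_h0 t : 0 <= t <= 1 -> in_h 0 t.
Proof. by move=> t01; split; [|split] => //; rewrite ltxx. Qed.

Lemma in_h_monotone za zb a b : in_h za a -> in_h zb b -> 0 <= (a - b) * (za - zb).
Proof.
move=> ha hb; have /andP[a0 a1] := in_h_bounds ha; have /andP[b0 b1] := in_h_bounds hb.
case: ha hb => [ha_lt [_ ha_gt]] [hb_lt [_ hb_gt]].
case: (ltrgtP za zb) => [za_lt|za_gt|->]; last by rewrite subrr mulr0.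
- have a_le_b : a <= b.
    by case: (ltrP 0 zb) => [/hb_gt ->|zb_le0] //; rewrite ha_lt //; exact: lt_le_trans zb_le0.
  by apply: mulr_le0; lra.
- have b_le_a : b <= a.
    by case: (ltrP 0 za) => [/ha_gt ->|za_le0] //; rewrite hb_lt //; exact: lt_le_trans za_le0.
  by apply: mulr_ge0; lra.
Qed.

Definition selector_gap z t := ppart z * (1 - t) + npart z * t.

Lemma selector_gapE z t : selector_gap z t = ppart z - t * z.
Proof. by rewrite /selector_gap ppartE npartE; case: ifP => _; ring. Qed.

Lemma selector_gap_ge0 z t : 0 <= t <= 1 -> 0 <= selector_gap z t.
Proof.
case/andP=> t0 t1; apply: addr_ge0; apply: mulr_ge0; rewrite ?ppart_ge0 ?npart_ge0 //.
by rewrite subr_ge0.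
Qed.

Lemma selector_gap_eq0 z t : 0 <= t <= 1 -> selector_gap z t = 0 <-> in_h z t.
Proof.
move=> t01; rewrite selector_gapE ppartE.
case: (ltrgtP z 0) => [z_lt0|z_gt0|->]; split.
- rewrite sub0r => /eqP; rewrite oppr_eq0 mulf_eq0 (negbTE (ltr0_neq0 z_lt0)) orbF.
  by move=> /eqP->; exact/in_h_le0/ltW.
- by case=> /(_ z_lt0)->; rewrite mul0r subrr.
- rewrite -{1}[z]mul1r -mulrBl => /eqP; rewrite mulf_eq0 (negbTE (lt0r_neq0 z_gt0)) orbF.
  by rewrite subr_eq0 => /eqP<-; exact/in_h_ge0/ltW.
- by case=> _ [_ /(_ z_gt0)->]; rewrite mul1r subrr.
- by move=> _; exact: in_h0.
- by rewrite mulr0 subrr.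
Qed.

End HardSelector.

Section LipschitzOn.
Variables (R : realFieldType) (n : nat) (P : 'cV[R]_n -> Prop).
Implicit Types (f g : 'cV[R]_n -> R) (x y : 'cV[R]_n).

Lemma lipschitz_on_ext f g : (forall x, f x = g x) -> lipschitz_on P f -> lipschitz_on P g.
Proof. by move=> fg [L [L0 hL]]; exists L; split=> // x y Px Py; rewrite -!fg; exact: hL. Qed.

Lemma lipschitz_on_cst (c : R) : lipschitz_on P (fun=> c).
Proof. by exists 0; split=> // x y _ _; rewrite subrr normr0 mul0r. Qed.

Lemma lipschitz_on_coord i : lipschitz_on P (fun x => x i 0).
Proof.
exists 1; split=> // x y _ _; rewrite mul1r (bigD1 i) //= lerDl.
by apply: sumr_ge0 => j _.
Qed.

Lemma lipschitz_onD f g :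
  lipschitz_on P f -> lipschitz_on P g -> lipschitz_on P (fun x => f x + g x).
Proof.
move=> [Lf [Lf0 hf]] [Lg [Lg0 hg]]; exists (Lf + Lg); split; first exact: addr_ge0.
move=> x y Px Py; rewrite mulrDl opprD addrACA.
exact: le_trans (ler_normD _ _) (lerD (hf x y Px Py) (hg x y Px Py)).
Qed.

Lemma lipschitz_onZ (c : R) f : lipschitz_on P f -> lipschitz_on P (fun x => c * f x).
Proof.
move=> [L [L0 hL]]; exists (`|c| * L); split=> [|x y Px Py]; first exact: mulr_ge0.
by rewrite -mulrBr normrM -mulrA; apply: ler_wpM2l => //; exact: hL.
Qed.

Lemma lipschitz_onB f g :
  lipschitz_on P f -> lipschitz_on P g -> lipschitz_on P (fun x => f x - g x).
Proof.
move=> hf hg; apply: lipschitz_on_ext (lipschitz_onD hf (lipschitz_onZ (-1) hg)) => x.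
by rewrite mulN1r.
Qed.

Lemma lipschitz_on_sum (I : Type) (r : seq I) (F : I -> 'cV[R]_n -> R) :
  (forall i, lipschitz_on P (F i)) -> lipschitz_on P (fun x => \sum_(i <- r) F i x).
Proof.
move=> hF; elim: r => [|i r IH].
  by apply: lipschitz_on_ext (lipschitz_on_cst 0) => x; rewrite big_nil.
by apply: lipschitz_on_ext (lipschitz_onD (hF i) IH) => x; rewrite big_cons.
Qed.

Lemma lipschitz_on_ppart f : lipschitz_on P f -> lipschitz_on P (fun x => ppart (f x)).
Proof.
move=> [L [L0 hL]]; exists L; split=> // x y Px Py.
exact: le_trans (ppart_lipschitz _ _) (hL x y Px Py).
Qed.

Section BoundedDomain.
Variables (x0 : 'cV[R]_n) (r : R).
Hypotheses (Px0 : P x0) (P_bounded : forall x, P x -> \sum_i `|x i 0 - x0 i 0| <= r).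

Lemma lipschitz_on_bounded f : lipschitz_on P f -> exists M, forall x, P x -> `|f x| <= M.
Proof.
move=> [L [L0 hL]]; exists (`|f x0| + L * r) => x Px.
rewrite -[f x](subrK (f x0)) addrC; apply: le_trans (ler_normD _ _) _; rewrite lerD2l.
exact: le_trans (hL x x0 Px Px0) (ler_wpM2l L0 (P_bounded Px)).
Qed.

Lemma lipschitz_onM f g :
  lipschitz_on P f -> lipschitz_on P g -> lipschitz_on P (fun x => f x * g x).
Proof.
move=> hf hg; have [Mf hMf] := lipschitz_on_bounded hf.
have [Mg hMg] := lipschitz_on_bounded hg.
have Mf0 : 0 <= Mf := le_trans (normr_ge0 _) (hMf _ Px0).
have Mg0 : 0 <= Mg := le_trans (normr_ge0 _) (hMg _ Px0).
case: hf hg => [Lf [Lf0 hLf]] [Lg [Lg0 hLg]].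
exists (Mf * Lg + Lf * Mg); split=> [|x y Px Py]; first by rewrite addr_ge0 ?mulr_ge0.
set S := \sum_i _.
have -> : f x * g x - f y * g y = f x * (g x - g y) + (f x - f y) * g y by ring.
have -> : (Mf * Lg + Lf * Mg) * S = Mf * (Lg * S) + (Lf * S) * Mg by ring.
by apply: le_trans (ler_normD _ _) _; rewrite !normrM lerD ?ler_pM ?hMf ?hMg ?hLf ?hLg.
Qed.

End BoundedDomain.

End LipschitzOn.

Lemma Dmx_mulE (R : realFieldType) n (d : 'I_n -> R) (x : 'cV[R]_n) i :
  (Dmx d *m x) i 0 = d i * x i 0.
Proof. by rewrite /Dmx mul_diag_mx !mxE. Qed.

Lemma Dmx_formE (R : realFieldType) n (lam : 'I_n -> R) (a b : 'cV[R]_n) :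
  (a^T *m Dmx lam *m b) 0 0 = \sum_i lam i * a i 0 * b i 0.
Proof. by rewrite /Dmx mul_mx_diag mxE; apply: eq_bigr => i _; rewrite !mxE [_ * lam i]mulrC. Qed.

Section SelectorLyapunov.
Variables (R : realFieldType) (n : nat) (W : 'M[R]_n) (d lam : 'I_n -> R) (u : 'cV[R]_n).
Local Notation z x := ((W - Dmx d) *m x + u).
Local Notation V := (Vinf W d lam u).

Lemma equilibriumP x : equilibrium W d u x <-> forall i, in_h (z x i 0) (d i * x i 0).
Proof.
split=> [[h [hh /eqP]]|hx]; last by exists (Dmx d *m x); split=> [i|]; rewrite ?Dmx_mulE ?addNr.
by rewrite eq_sym addrC subr_eq0 => /eqP h_eq i; rewrite -Dmx_mulE -h_eq.
Qed.

Hypothesis lam_ge0 : forall i, 0 <= lam i.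

Lemma Vinf_ppart x : V x = \sum_i lam i * (ppart (z x i 0) - d i * z x i 0 * x i 0).
Proof.
have payoffE (zeta : {ffun 'I_n -> bool}) :
    ((z x)^T *m Dmx lam *m (zcol R zeta - Dmx d *m x)) 0 0
    = \sum_i lam i * (z x i 0 * (zeta i)%:R - d i * z x i 0 * x i 0).
  rewrite Dmx_formE; apply: eq_bigr => i _.
  rewrite [(zcol R zeta - _) i 0]mxE [zcol R zeta i 0]mxE [(- (Dmx d *m x)) i 0]mxE.
  by rewrite Dmx_mulE; ring.
rewrite /Vinf /=; apply/le_anti/andP; split.
  apply: bigmax_le => [|zeta _]; rewrite payoffE; apply: ler_sum => i _;
  by rewrite ler_wpM2l // lerD2r mulr_natb_le_ppart.
apply: le_trans (le_bigmax _ _ [ffun i => 0 < z x i 0]); rewrite payoffE.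
by apply: ler_sum => i _; rewrite ffunE mulr_natb_gt0.
Qed.

Lemma Vinf_gap x : V x = \sum_i lam i * selector_gap (z x i 0) (d i * x i 0).
Proof. by rewrite Vinf_ppart; apply: eq_bigr => i _; rewrite selector_gapE mulrAC. Qed.

Lemma Vinf_ge0 x : inX d x -> 0 <= V x.
Proof. by move=> hx; rewrite Vinf_gap sumr_ge0 // => i _; rewrite mulr_ge0 ?selector_gap_ge0. Qed.

Lemma Vinf_eq0 x : (forall i, 0 < lam i) -> inX d x ->
  V x = 0 <-> forall i, in_h (z x i 0) (d i * x i 0).
Proof.
move=> lam_gt0 hx; rewrite Vinf_gap; split=> [V0 i|hz].
  apply/selector_gap_eq0 => //; apply/eqP.
  have terms_ge0 j : true -> 0 <= lam j * selector_gap (z x j 0) (d j * x j 0).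
    by move=> _; rewrite mulr_ge0 ?selector_gap_ge0.
  have /eqP := psumr_eq0P (i := i) terms_ge0 V0 isT.
  by rewrite mulf_eq0 (gt_eqF (lam_gt0 i)).
by apply: big1 => i _; rewrite (proj2 (selector_gap_eq0 _ (hx i)) (hz i)) mulr0.
Qed.

Lemma lipschitz_on_Vinf : (forall i, 0 < d i) -> lipschitz_on (inX d) V.
Proof.
move=> d_gt0.
have X0 : inX d 0 by move=> i; rewrite mxE mulr0 lexx ler01.
have X_bounded x : inX d x -> \sum_i `|x i 0 - (0 : 'cV[R]_n) i 0| <= \sum_i (d i)^-1.
  move=> hx; apply: ler_sum => i _; have /andP[dx0 dx1] := hx i.
  rewrite mxE subr0 ger0_norm; last by rewrite -(pmulr_rge0 _ (d_gt0 i)).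
  by rewrite -[(d i)^-1]mul1r ler_pdivlMr // mulrC.
have z_lip i : lipschitz_on (inX d) (fun x => z x i 0).
  have row_lip := lipschitz_on_sum (index_enum _)
    (fun j => lipschitz_onZ ((W - Dmx d) i j) (lipschitz_on_coord (inX d) j)).
  apply: lipschitz_on_ext (lipschitz_onD row_lip (lipschitz_on_cst _ (u i 0))).
  by move=> x; rewrite [z x i 0]mxE [(_ *m x) i 0]mxE.
apply: (lipschitz_on_ext (f := fun x => \sum_i lam i * (ppart (z x i 0) - d i * z x i 0 * x i 0))).
  by move=> x; rewrite Vinf_ppart.
apply: lipschitz_on_sum => i; apply/lipschitz_onZ/lipschitz_onB; first exact/lipschitz_on_ppart.
by apply: (lipschitz_onM X0 X_bounded); [exact: lipschitz_onZ | exact: lipschitz_on_coord].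
Qed.

End SelectorLyapunov.

(* By the Fiedler-Ptak theorem, M is a P-matrix iff it reverses the sign of no nonzero vector. *)
Definition Pmatrix (R : numDomainType) n (M : 'M[R]_n) :=
  forall v : 'cV[R]_n, (forall i, v i 0 * (M *m v) i 0 <= 0) -> v = 0.

Lemma LDS_cert_Pmatrix (R : realFieldType) n (A : 'M[R]_n) (lam : 'I_n -> R) :
  (forall i, 0 < lam i) -> LDS_cert A lam -> Pmatrix (- A).
Proof.
move=> lam_gt0 A_lds v v_rev.
have vAv_ge0 i : 0 <= v i 0 * (A *m v) i 0.
  by have := v_rev i; rewrite mulNmx mxE mulrN oppr_le0.
have form_ge0 : 0 <= (v^T *m (A^T *m Dmx lam + Dmx lam *m A) *m v) 0 0.
  rewrite mulmxDr mulmxDl mxE.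
  have -> : v^T *m (A^T *m Dmx lam) *m v = (A *m v)^T *m Dmx lam *m v.
    by rewrite mulmxA trmx_mul.
  have -> : v^T *m (Dmx lam *m A) *m v = v^T *m Dmx lam *m (A *m v) by rewrite !mulmxA.
  rewrite !Dmx_formE.
  by apply: addr_ge0; apply: sumr_ge0 => i _; rewrite -mulrA mulr_ge0 ?(ltW (lam_gt0 i)) // mulrC.
by apply/eqP; apply: contraTT form_ge0 => /A_lds; rewrite ltNge.
Qed.

Section SelectorComplementarity.
Variables (R : realFieldType) (n : nat) (A : 'M[R]_n) (u : 'cV[R]_n) (d : 'I_n -> R).
Hypotheses (d_gt0 : forall i, 0 < d i) (negA_P : Pmatrix (- A)).
Local Notation z x := (A *m x + u).

Definition pairing (x y : 'cV[R]_n) i := (d i * x i 0 - d i * y i 0) * (z x i 0 - z y i 0).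

Lemma eq_of_pairing_ge0 x y : (forall i, 0 <= pairing x y i) -> x = y.
Proof.
move=> xy_ge0; apply/eqP; rewrite -subr_eq0; apply/eqP/negA_P => i.
have := xy_ge0 i; rewrite /pairing -mulrBr -mulrA pmulr_rge0 //.
have -> : z x i 0 - z y i 0 = (A *m (x - y)) i 0 by rewrite mulmxBr !mxE; ring.
rewrite mulNmx [(- (A *m (x - y))) i 0]mxE [(x - y) i 0]mxE [(- y) i 0]mxE.
by rewrite mulrN oppr_le0.
Qed.

Inductive constraint := Selector | Pinned of R | Balanced.

Definition satisfies k (t zt : R) :=
  match k with Selector => in_h zt t | Pinned c => t = c | Balanced => zt = 0 end.

Lemma satisfies_monotone k ta tb za zb :
  satisfies k ta za -> satisfies k tb zb -> 0 <= (ta - tb) * (za - zb).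
Proof.
case: k => [|c|] /=; first exact: in_h_monotone.
  by move=> -> ->; rewrite subrr mul0r.
by move=> -> ->; rewrite subrr mulr0.
Qed.

Definition solves (kappa : 'I_n -> constraint) (x : 'cV[R]_n) i :=
  satisfies (kappa i) (d i * x i 0) (z x i 0).

Definition solvable kappa := exists x, forall i, solves kappa x i.

Definition set_constraint (kappa : 'I_n -> constraint) j k : 'I_n -> constraint :=
  fun i => if i == j then k else kappa i.

Lemma solves_set_constraint kappa j k x :
  (forall i, solves (set_constraint kappa j k) x i) ->
  satisfies k (d j * x j 0) (z x j 0) /\ forall i, i != j -> solves kappa x i.
Proof.
move=> hx; split=> [|i ij]; first by have := hx j; rewrite /solves /set_constraint eqxx.
by have := hx i; rewrite /solves /set_constraint (negbTE ij).
Qed.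

Lemma eq_of_pairing_ge0_at kappa j x y :
  (forall i, i != j -> solves kappa x i) -> (forall i, i != j -> solves kappa y i) ->
  0 <= pairing x y j -> x = y.
Proof.
move=> hx hy hj; apply: eq_of_pairing_ge0 => i; case: (eqVneq i j) => [->//|ij].
exact: satisfies_monotone (hx i ij) (hy i ij).
Qed.

Lemma solvable_selector kappa j : kappa j = Selector ->
  solvable (set_constraint kappa j (Pinned 0)) -> solvable (set_constraint kappa j (Pinned 1)) ->
  solvable (set_constraint kappa j Balanced) -> solvable kappa.
Proof.
move=> kj [y0 /solves_set_constraint [/= t0 s0]] [y1 /solves_set_constraint [/= t1 s1]].
move=> [yf /solves_set_constraint [/= zf sf]].
have solvable_at x : (forall i, i != j -> solves kappa x i) ->
    in_h (z x j 0) (d j * x j 0) -> solvable kappa.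
  move=> hx hj; exists x => i; case: (eqVneq i j) => [->|ij]; last exact: hx.
  by rewrite /solves kj.
case: (lerP (z y0 j 0) 0) => [z0_le0|z0_gt0].
  by apply: (solvable_at y0 s0); rewrite t0; exact: in_h_le0.
case: (lerP 0 (z y1 j 0)) => [z1_ge0|z1_lt0].
  by apply: (solvable_at y1 s1); rewrite t1; exact: in_h_ge0.
apply: (solvable_at yf sf); rewrite zf; apply: in_h0.
(* A value of [d j * yf j 0] outside [0, 1] would make [yf] coincide with [y0] or [y1]. *)
rewrite !leNgt; apply/andP; split; apply/negP => tf_out.
- have yf_y0 : yf = y0.
    by apply: (eq_of_pairing_ge0_at sf s0); rewrite /pairing t0 zf; apply: mulr_le0; lra.
  by move: tf_out; rewrite yf_y0 t0 ltxx.
- have yf_y1 : yf = y1.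
    by apply: (eq_of_pairing_ge0_at sf s1); rewrite /pairing t1 zf; apply: mulr_ge0; lra.
  by move: tf_out; rewrite yf_y1 t1 ltxx.
Qed.

Definition is_selector k := if k is Selector then true else false.
Definition is_balanced k := if k is Balanced then true else false.

Lemma solvable_balanced kappa j : (forall i, ~~ is_selector (kappa i)) -> kappa j = Balanced ->
  solvable (set_constraint kappa j (Pinned 0)) -> solvable (set_constraint kappa j (Pinned 1)) ->
  solvable kappa.
Proof.
move=> no_sel kj [y0 /solves_set_constraint [/= t0 s0]] [y1 /solves_set_constraint [/= t1 s1]].
have z01 : z y0 j 0 - z y1 j 0 != 0.
  apply/negP; rewrite subr_eq0 => /eqP z01; have := eq_of_pairing_ge0_at s1 s0.
  rewrite /pairing z01 subrr mulr0 lexx => /(_ isT) y10.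
  by move: t1; rewrite y10 t0 => /eqP; rewrite eq_sym oner_eq0.
(* The constraints other than [j] are affine, so they hold along the line through [y0] and [y1]. *)
pose s := z y0 j 0 / (z y0 j 0 - z y1 j 0).
exists (y0 + s *: (y1 - y0)) => i.
have t_affine :
    d i * (y0 + s *: (y1 - y0)) i 0 = d i * y0 i 0 + s * (d i * y1 i 0 - d i * y0 i 0).
  by rewrite !mxE; ring.
have z_affine : z (y0 + s *: (y1 - y0)) i 0 = z y0 i 0 + s * (z y1 i 0 - z y0 i 0).
  by rewrite mulmxDr -scalemxAr mulmxBr !mxE; ring.
rewrite /solves t_affine z_affine; case: (eqVneq i j) => [->|ij].
  by rewrite kj /= /s; field.
move: (s0 i ij) (s1 i ij) (no_sel i); rewrite /solves; case: (kappa i) => [|c|] //= -> ->.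
  by rewrite subrr mulr0 addr0.
by rewrite subrr mulr0 addr0.
Qed.

Definition weight k := match k with Selector => 2 | Pinned _ => 0 | Balanced => 1 end%N.

Lemma weight_set_constraint kappa j k : (weight k < weight (kappa j))%N ->
  (\sum_i weight (set_constraint kappa j k i) < \sum_i weight (kappa i))%N.
Proof.
move=> lt_k; rewrite [X in (X < _)%N](bigD1 j) //= [X in (_ < X)%N](bigD1 j) //=.
rewrite /set_constraint eqxx (eq_bigr (fun i => weight (kappa i))) ?ltn_add2r //.
by move=> i /negbTE->.
Qed.

Lemma solvable_all kappa : solvable kappa.
Proof.
have [m] := ubnP (\sum_i weight (kappa i))%N; elim: m kappa => // m IH kappa lt_m.
have IH_set j k : (weight k < weight (kappa j))%N -> solvable (set_constraint kappa j k).
  by move=> lt_k; apply: IH; apply: leq_trans (weight_set_constraint lt_k) _; rewrite -ltnS.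
case: (pickP [pred j | is_selector (kappa j)]) => [j /= sel_j|no_sel].
  have kj : kappa j = Selector by case: (kappa j) sel_j.
  by apply: (solvable_selector kj); apply: IH_set; rewrite kj.
have {}no_sel i : ~~ is_selector (kappa i) by exact: negbT (no_sel i).
case: (pickP [pred j | is_balanced (kappa j)]) => [j /= bal_j|no_bal].
  have kj : kappa j = Balanced by case: (kappa j) bal_j (no_sel j).
  by apply: (solvable_balanced no_sel kj); apply: IH_set; rewrite kj.
exists (\col_i if kappa i is Pinned c then c / d i else 0) => i; rewrite /solves mxE.
move: (no_sel i) (negbT (no_bal i)) => /=; case: (kappa i) => //= c _ _.
by rewrite mulrCA divff ?mulr1 // gt_eqF.
Qed.

Lemma exists_selector_solution : exists x, forall i, in_h (z x i 0) (d i * x i 0).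
Proof. exact: (solvable_all (fun=> Selector)). Qed.

Lemma selector_solution_unique x y : (forall i, in_h (z x i 0) (d i * x i 0)) ->
  (forall i, in_h (z y i 0) (d i * y i 0)) -> x = y.
Proof. by move=> hx hy; apply: eq_of_pairing_ge0 => i; exact: in_h_monotone. Qed.

End SelectorComplementarity.

Theorem proposition8 (R : realFieldType) (n : nat) (d : 'I_n -> R) (W : 'M[R]_n)
    (u : 'cV[R]_n) (lam : 'I_n -> R)
    (hd : forall i, 0 < d i) (hlam : forall i, 0 < lam i) :
  let A := W - Dmx d in
  let V := Vinf W d lam u in
  (* (i) *)
  (forall x, inX d x ->
     V x = \sum_i lam i * (ppart ((A *m x + u) i 0) * (1 - d i * x i 0)
                          + npart ((A *m x + u) i 0) * (d i * x i 0))
     /\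
     V x = \sum_i lam i * (ppart ((A *m x + u) i 0)
                          - d i * (A *m x + u) i 0 * x i 0)) /\
  (* (ii) *)
  lipschitz_on (inX d) V /\
  (forall x, inX d x -> 0 <= V x) /\
  (* (iii) *)
  (forall x, inX d x -> (V x = 0 <-> equilibrium W d u x)) /\
  (* in particular: Lyapunov diagonal stability with certificate Lambda *)
  (LDS_cert A lam ->
     exists xs : 'cV[R]_n,
       equilibrium W d u xs /\ (forall y, equilibrium W d u y -> y = xs) /\
       inX d xs /\ V xs = 0 /\
       (forall x, inX d x -> x != xs -> 0 < V x)).
Proof.
move=> A V; have lam_ge0 i := ltW (hlam i).
have V_eq0 x : inX d x -> V x = 0 <-> equilibrium W d u x.
  by move=> hx; rewrite Vinf_eq0 // equilibriumP.
split; first by move=> x _; split; [exact: Vinf_gap | exact: Vinf_ppart].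
split; first exact: lipschitz_on_Vinf.
split; first by move=> x; exact: Vinf_ge0.
split=> // /(LDS_cert_Pmatrix hlam) negA_P.
have [xs xs_sol] := exists_selector_solution u hd negA_P.
have xs_unique y : equilibrium W d u y -> y = xs.
  by move/equilibriumP => y_sol; exact: (selector_solution_unique hd negA_P y_sol xs_sol).
have xs_X : inX d xs by move=> i; exact: in_h_bounds (xs_sol i).
have xs_eq : equilibrium W d u xs by apply/equilibriumP.
exists xs; do 4!split=> //; first exact/(V_eq0 xs xs_X).
move=> x hx x_neq; rewrite lt_def Vinf_ge0 // andbT; apply: contra x_neq => /eqP V0.
by apply/eqP/xs_unique/(V_eq0 x hx).
Qed.
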